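(* Let $n\ge1$. Let $\Gamma_1$ be a cocompact lattice in the $(4n+1)$-dimensional Heisenberg group $H_{2n}$. Let $\Gamma_2$ be a discrete subgroup of the universal cover $\widetilde{SL(2,\mathbb R)}$ with compact quotient. Then the compact manifold $(H_{2n}\times\widetilde{SL(2,\mathbb R)})/(\Gamma_1\times\Gamma_2)$ admits an invariant HPKT structure which is not strong.
   Context: The Heisenberg Lie algebra $\mathfrak h_{2n}$ has basis $X_1,\dots,X_{2n},Y_1,\dots,Y_{2n},Z$ with nonzero brackets $[X_j,Y_j]=Z$. $H_{2n}$ is the corresponding simply connected Lie group. An almost hyper-paracomplex structure on a manifold is a triple $(J_1,J_2,J_3)$ of endomorphisms of the tangent bundle with $J_1^2=J_2^2=\mathrm{id}$, $J_3^2=-\mathrm{id}$ and $J_1J_2=-J_2J_1=J_3$. It is hyper-paracomplex if each $J_a$ has vanishing Nijenhuis tensor. A metric $g$ is hyperparahermitian if $g(J_1X,J_1Y)=g(J_2X,J_2Y)=-g(J_3X,J_3Y)=-g(X,Y)$. An HPKT structure is a hyper-paracomplex structure together with a hyperparahermitian metric admitting a linear connection $\nabla$ with $\nabla g=\nabla J_a=0$ and totally skew-symmetric torsion $T^\nabla$. It is strong if the torsion 3-form is closed. ''Invariant'' means induced by left-invariant structures on the group, with the discrete subgroup acting by left translations. *)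

From HB Require Import structures.
From mathcomp Require Import all_boot all_order all_algebra.
From mathcomp Require Import reals.
Set Implicit Arguments. Unset Strict Implicit. Unset Printing Implicit Defensive.
Import Order.TTheory GRing.Theory Num.Theory.
Local Open Scope ring_scope.

(* Vectors of a Lie algebra of dimension m are column vectors 'cV[R]_m;
   endomorphisms are matrices acting on the left (J X := J *m X). *)

Section LieAlgebraStructures.
Variables (R : realType) (m : nat).
Variable br : 'cV[R]_m -> 'cV[R]_m -> 'cV[R]_m.

Definition bform (G : 'M[R]_m) (X Y : 'cV[R]_m) : R := (X^T *m G *m Y) 0 0.

Definition is_metric (G : 'M[R]_m) : Prop := G^T = G /\ G \in unitmx.

Definition almost_hyper_paracomplex (J1 J2 J3 : 'M[R]_m) : Prop :=
  [/\ J1 *m J1 = 1%:M, J2 *m J2 = 1%:M, J3 *m J3 = - 1%:M,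
      J1 *m J2 = J3 & J2 *m J1 = - J3].

(* Nijenhuis tensor of a left-invariant endomorphism J (general formula,
   valid for J^2 = id and J^2 = -id) *)
Definition nijenhuis (J : 'M[R]_m) (X Y : 'cV[R]_m) : 'cV[R]_m :=
  br (J *m X) (J *m Y) - J *m br (J *m X) Y - J *m br X (J *m Y)
  + J *m (J *m br X Y).

Definition integrable (J : 'M[R]_m) : Prop :=
  forall X Y, nijenhuis J X Y = 0.

Definition hyper_paracomplex (J1 J2 J3 : 'M[R]_m) : Prop :=
  [/\ almost_hyper_paracomplex J1 J2 J3,
      integrable J1, integrable J2 & integrable J3].

Definition hyperparahermitian (J1 J2 J3 G : 'M[R]_m) : Prop :=
  is_metric G /\
  forall X Y,
  [/\ bform G (J1 *m X) (J1 *m Y) = - bform G X Y,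
      bform G (J2 *m X) (J2 *m Y) = - bform G X Y &
      bform G (J3 *m X) (J3 *m Y) = bform G X Y].

(* A left-invariant linear connection is given by Gam i = nabla_{e_i}. *)
Definition nabla (Gam : 'I_m -> 'M[R]_m) (X Y : 'cV[R]_m) : 'cV[R]_m :=
  (\sum_(i < m) X i 0 *: Gam i) *m Y.

Definition torsion (Gam : 'I_m -> 'M[R]_m) (X Y : 'cV[R]_m) : 'cV[R]_m :=
  nabla Gam X Y - nabla Gam Y X - br X Y.

Definition torsion3 (G : 'M[R]_m) (Gam : 'I_m -> 'M[R]_m) (X Y Z : 'cV[R]_m) : R :=
  bform G (torsion Gam X Y) Z.

Definition HPKT_connection (J1 J2 J3 G : 'M[R]_m) (Gam : 'I_m -> 'M[R]_m) : Prop :=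
  (forall X Y Z, bform G (nabla Gam X Y) Z + bform G Y (nabla Gam X Z) = 0) /\
  (forall X Y, [/\ nabla Gam X (J1 *m Y) = J1 *m nabla Gam X Y,
                  nabla Gam X (J2 *m Y) = J2 *m nabla Gam X Y &
                  nabla Gam X (J3 *m Y) = J3 *m nabla Gam X Y]) /\
  (forall X Y Z, torsion3 G Gam X Y Z = - torsion3 G Gam X Z Y).

Definition HPKT (J1 J2 J3 G : 'M[R]_m) (Gam : 'I_m -> 'M[R]_m) : Prop :=
  [/\ hyper_paracomplex J1 J2 J3, hyperparahermitian J1 J2 J3 G
    & HPKT_connection J1 J2 J3 G Gam].

(* Chevalley--Eilenberg differential of a left-invariant 3-form *)
Definition d3 (T : 'cV[R]_m -> 'cV[R]_m -> 'cV[R]_m -> R)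
    (a b c d : 'cV[R]_m) : R :=
  - T (br a b) c d + T (br a c) b d - T (br a d) b c
  - T (br b c) a d + T (br b d) a c - T (br c d) a b.

Definition strong (G : 'M[R]_m) (Gam : 'I_m -> 'M[R]_m) : Prop :=
  forall a b c d, d3 (torsion3 G Gam) a b c d = 0.

End LieAlgebraStructures.

(* The Lie algebra h_{2n} (+) sl(2,R) of H_{2n} x ~SL(2,R), dimension 4n+4.
   Coordinates: X_j = index j (j < 2n), Y_j = index 2n+j, Z = index 4n,
   sl(2,R) basis H, E, F = indices 4n+1, 4n+2, 4n+3 with
   [X_j,Y_j] = Z, [H,E] = 2E, [H,F] = -2F, [E,F] = H. *)
Definition dimg (n : nat) : nat := (4 * n + 3).+1.

Definition hsl_bracket (R : realType) (n : nat) (u v : 'cV[R]_(dimg n))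
  : 'cV[R]_(dimg n) :=
  let c (w : 'cV[R]_(dimg n)) (k : nat) := w (@inord (4 * n + 3) k) 0 in
  let iH := (4 * n + 1)%N in let iE := (4 * n + 2)%N in let iF := (4 * n + 3)%N in
  \col_(k < dimg n)
    if val k == (4 * n)%N then
      \sum_(j < 2 * n) (c u j * c v (2 * n + j)%N - c u (2 * n + j)%N * c v j)
    else if val k == iH then c u iE * c v iF - c u iF * c v iE
    else if val k == iE then 2 * (c u iH * c v iE - c u iE * c v iH)
    else if val k == iF then - 2 * (c u iH * c v iF - c u iF * c v iH)
    else 0.

(* The horizontal part of h_{2n} is split into four blocks X_j, X_{n+j}, Y_j, Y_{n+j}
   (j < n).  On h_{2n} + sl(2,R) take J1 = +1 on the X's, -1 on the Y's, J1 Z = H,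
   J1 H = Z, J1 E = -E, J1 F = F; J2 swaps X_i and Y_i and maps Z, H, E, F to
   E + F, E - F, (Z + H)/2, (Z - H)/2; J3 = J1 J2.  The neutral metric pairs X_j with
   Y_{n+j}, X_{n+j} with Y_j, and is 2 z^2 - B/4 on R Z + sl(2,R), B the Killing form.
   Let P be the complex structure X_j -> X_{n+j} -> -X_j, Y_j -> Y_{n+j} -> -Y_j: it
   commutes with the J_a and g(P X, Y) = -omega(X, Y), where omega is the Z-component of
   the bracket.  Hence the connection nabla_X = 2 z(X) P preserves g and the J_a, and
   its torsion 3-form -2 z /\ omega - g([.,.], .)|sl(2) is totally skew (the second
   term because B is ad-invariant).  As dz = -omega, on horizontal vectors
   dT(a, b, c, d) = 4 (omega(a, b) omega(c, d) - omega(a, c) omega(b, d)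
   + omega(a, d) omega(b, c)), which is 4 on X_0, Y_0, X_n, Y_n. *)

From HB Require Import structures.
From mathcomp Require Import all_boot all_order all_algebra.
From mathcomp Require Import reals.
From mathcomp Require Import zify ring lra.
Set Implicit Arguments. Unset Strict Implicit. Unset Printing Implicit Defensive.
Import Order.TTheory GRing.Theory Num.Theory.
Local Open Scope ring_scope.

Lemma big_nat_add_split (V : nmodType) (F : nat -> V) a b :
  \sum_(0 <= i < a + b) F i = \sum_(0 <= i < a) F i + \sum_(0 <= j < b) F (a + j)%N.
Proof.
rewrite (@big_cat_nat _ _ _ a) //= ?leq_addr //; congr (_ + _).
by rewrite -{1}(add0n a) big_addn addKn; apply: eq_bigr => i _; rewrite addnC.
Qed.

Lemma big_ord_double (V : nmodType) (n : nat) (F : nat -> V) :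
  \sum_(j < 2 * n) F j = \sum_(j < n) (F j + F (n + j)%N).
Proof.
by rewrite -(big_mkord xpredT F) mul2n -addnn big_nat_add_split !big_mkord -big_split.
Qed.

Section LeftInvariantStructures.
Variables (R : realType) (m : nat).
Implicit Types (A B G P J : 'M[R]_m) (X Y Z : 'cV[R]_m).

Lemma mulmx_colI A B : (forall X, A *m X = B *m X) -> A = B.
Proof.
move=> eqAB; apply/matrixP => i j.
have := congr1 (fun v : 'cV[R]_m => v i 0) (eqAB (delta_mx j 0)).
by rewrite -!colE !mxE.
Qed.

Lemma bformDl G X1 X2 Y : bform G (X1 + X2) Y = bform G X1 Y + bform G X2 Y.
Proof. by rewrite /bform linearD !mulmxDl mxE. Qed.

Lemma bformNl G X Y : bform G (- X) Y = - bform G X Y.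
Proof. by rewrite /bform linearN !mulNmx mxE. Qed.

Lemma bformBl G X1 X2 Y : bform G (X1 - X2) Y = bform G X1 Y - bform G X2 Y.
Proof. by rewrite bformDl bformNl. Qed.

Lemma bformZl G c X Y : bform G (c *: X) Y = c * bform G X Y.
Proof. by rewrite /bform linearZ /= -!scalemxAl mxE. Qed.

Lemma bformZr G c X Y : bform G X (c *: Y) = c * bform G X Y.
Proof. by rewrite /bform -scalemxAr mxE. Qed.

Lemma bform_tr G X Y : bform G^T X Y = bform G Y X.
Proof.
rewrite /bform.
have -> : X^T *m G^T *m Y = (Y^T *m G *m X)^T by rewrite !trmx_mul trmxK mulmxA.
by rewrite mxE.
Qed.

Lemma bformI G1 G2 : (forall X Y, bform G1 X Y = bform G2 X Y) -> G1 = G2.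
Proof.
move=> eqG; apply/matrixP => i k; have := eqG (delta_mx i 0) (delta_mx k 0).
by rewrite /bform trmx_delta -!rowE -!colE !mxE => ->.
Qed.

Lemma is_metric_sym_inv G G' : G^T = G -> G *m G' = 1%:M -> is_metric G.
Proof. by move=> symG /mulmx1_unit[unitG _]. Qed.

Lemma almost_hyper_paracomplex_mul (J1 J2 : 'M[R]_m) :
  J1 *m J1 = 1%:M -> J2 *m J2 = 1%:M -> J2 *m J1 = - (J1 *m J2) ->
  almost_hyper_paracomplex J1 J2 (J1 *m J2).
Proof.
move=> J1J1 J2J2 J2J1; split=> //.
by rewrite mulmxA -(mulmxA J1) J2J1 mulmxN mulNmx mulmxA J1J1 mul1mx J2J2.
Qed.

Lemma hyperparahermitian_mul (J1 J2 : 'M[R]_m) G : is_metric G ->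
  (forall X Y, bform G (J1 *m X) (J1 *m Y) = - bform G X Y) ->
  (forall X Y, bform G (J2 *m X) (J2 *m Y) = - bform G X Y) ->
  hyperparahermitian J1 J2 (J1 *m J2) G.
Proof.
move=> metricG gJ1 gJ2; split=> // X Y; split=> //.
by rewrite -!mulmxA gJ1 gJ2 opprK.
Qed.

Lemma nabla_scale (f : 'I_m -> R) P X Y :
  nabla (fun i => f i *: P) X Y = (\sum_i X i 0 * f i) *: (P *m Y).
Proof.
rewrite /nabla; under eq_bigr do rewrite scalerA.
by rewrite -scaler_suml -scalemxAl.
Qed.

Lemma nabla_scale_metric (f : 'I_m -> R) P G X Y Z :
  (forall Y Z, bform G (P *m Y) Z = - bform G Y (P *m Z)) ->
  bform G (nabla (fun i => f i *: P) X Y) Z +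
  bform G Y (nabla (fun i => f i *: P) X Z) = 0.
Proof. by move=> skewP; rewrite !nabla_scale bformZl bformZr skewP mulrN addNr. Qed.

Lemma nabla_scale_commute (f : 'I_m -> R) P J X Y : P *m J = J *m P ->
  nabla (fun i => f i *: P) X (J *m Y) = J *m nabla (fun i => f i *: P) X Y.
Proof. by move=> PJ; rewrite !nabla_scale mulmxA PJ -mulmxA scalemxAr. Qed.

End LeftInvariantStructures.

Section HeisenbergSl2.
Variables (R : realType) (n : nat).

Local Notation V := 'cV[R]_(dimg n).
Local Notation M := 'M[R]_(dimg n).
Local Notation br := (@hsl_bracket R n).
Local Notation iZ := (4 * n)%N.
Local Notation iH := (4 * n + 1)%N.
Local Notation iE := (4 * n + 2)%N.
Local Notation iF := (4 * n + 3)%N.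

Definition entry (X : V) (k : nat) : R := X (@inord (4 * n + 3) k) 0.

(* Like [inord], out-of-range indices are sent to 0. *)
Definition clamp (k : nat) : nat := if (k < 4 * n + 4)%N then k else 0.

Lemma val_inord_clamp k : val (@inord (4 * n + 3) k) = clamp k.
Proof. by rewrite /inord /clamp val_insubd; case: ifP; case: ifP => //; lia. Qed.

Lemma entryD (X Y : V) k : entry (X + Y) k = entry X k + entry Y k.
Proof. by rewrite /entry mxE. Qed.

Lemma entryN (X : V) k : entry (- X) k = - entry X k.
Proof. by rewrite /entry mxE. Qed.

Lemma entryZ c (X : V) k : entry (c *: X) k = c * entry X k.
Proof. by rewrite /entry mxE. Qed.

Lemma entry0 k : entry (0 : V) k = 0.
Proof. by rewrite /entry mxE. Qed.

Lemma entry_ord (X : V) (i : 'I_(dimg n)) : entry X i = X i 0.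
Proof. by rewrite /entry inord_val. Qed.

Lemma entryI (X Y : V) :
  (forall k, (k < 4 * n + 4)%N -> entry X k = entry Y k) -> X = Y.
Proof.
move=> eqXY; apply/colP => i; rewrite -!entry_ord; apply: eqXY.
by have := ltn_ord i; rewrite /dimg; lia.
Qed.

Lemma sum_delta_entry (X : V) (p : nat) (c : R) : (p < 4 * n + 4)%N ->
  \sum_(l < dimg n) (val l == p)%:R * c * X l 0 = c * entry X p.
Proof.
move=> hp; have hp' : (p < dimg n)%N by rewrite /dimg; lia.
rewrite (bigD1 (Ordinal hp')) //= eqxx mul1r big1 ?addr0.
  by rewrite -(entry_ord X (Ordinal hp')).
by move=> l neq_lp; rewrite (_ : val l == p = false) ?mul0r //; apply: negbTE.
Qed.

Definition sparse_mx (s t : nat -> nat) (a b : nat -> R) : M :=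
  \matrix_(i, l) ((val l == s i)%:R * a i + (val l == t i)%:R * b i).

Lemma entry_sparse_mx s t a b (X : V) k :
  (forall k, k < 4 * n + 4 -> s k < 4 * n + 4)%N ->
  (forall k, k < 4 * n + 4 -> t k < 4 * n + 4)%N ->
  entry (sparse_mx s t a b *m X) k =
  a (clamp k) * entry X (s (clamp k)) + b (clamp k) * entry X (t (clamp k)).
Proof.
have hk : (clamp k < 4 * n + 4)%N by rewrite /clamp; case: ifP; lia.
move=> hs ht; rewrite {1}/entry mxE.
under eq_bigr do rewrite mxE mulrDl.
by rewrite big_split /= val_inord_clamp !sum_delta_entry ?hs ?ht.
Qed.

Variant basis_index : nat -> Prop :=
  | IndexX1 (j : 'I_n) : basis_index j
  | IndexX2 (j : 'I_n) : basis_index (n + j)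
  | IndexY1 (j : 'I_n) : basis_index (2 * n + j)
  | IndexY2 (j : 'I_n) : basis_index (3 * n + j)
  | IndexZ : basis_index iZ
  | IndexH : basis_index iH
  | IndexE : basis_index iE
  | IndexF : basis_index iF.

Lemma basis_indexP k : (k < 4 * n + 4)%N -> basis_index k.
Proof.
move=> hk.
case: (ltnP k n) => [h1|h1]; first exact: (IndexX1 (Ordinal h1)).
case: (ltnP k (2 * n)) => [h2|h2].
  have hj : (k - n < n)%N by lia.
  by rewrite -(subnKC h1); apply: (IndexX2 (Ordinal hj)).
case: (ltnP k (3 * n)) => [h3|h3].
  have hj : (k - 2 * n < n)%N by lia.
  by rewrite -(subnKC h2); apply: (IndexY1 (Ordinal hj)).
case: (ltnP k (4 * n)) => [h4|h4].
  have hj : (k - 3 * n < n)%N by lia.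
  by rewrite -(subnKC h3); apply: (IndexY2 (Ordinal hj)).
have [->|[->|[->|->]]] : k = iZ \/ k = iH \/ k = iE \/ k = iF by lia.
- exact: IndexZ.
- exact: IndexH.
- exact: IndexE.
- exact: IndexF.
Qed.

Lemma sum_dimg_blocks (F : nat -> R) :
  \sum_(i < dimg n) F i =
  \sum_(j < n) (F j + F (n + j)%N + F (2 * n + j)%N + F (3 * n + j)%N)
  + F iZ + F iH + F iE + F iF.
Proof.
rewrite -(big_mkord xpredT F) (_ : dimg n = n + n + n + n + 4)%N; last first.
  by rewrite /dimg; lia.
rewrite !big_nat_add_split !big_mkord -!big_split /= !big_ord_recl big_ord0 /=.
have e2 : (n + n = 2 * n)%N by lia.
have e3 : (2 * n + n = 3 * n)%N by lia.
have e4 : (3 * n + n = 4 * n)%N by lia.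
by rewrite /bump /= !addr0 !addn0 !addn1 e2 e3 e4 -!addrA.
Qed.

Definition blockwise (T : Type) (x0 x1 x2 x3 : T) (k : nat) : T :=
  if (k < n)%N then x0 else if (k < 2 * n)%N then x1
  else if (k < 3 * n)%N then x2 else x3.

Definition reblock (b0 b1 b2 b3 : nat) (k : nat) : nat :=
  blockwise (b0 * n + k)%N (b1 * n + (k - n))%N
            (b2 * n + (k - 2 * n))%N (b3 * n + (k - 3 * n))%N k.

Definition col_J1 (k : nat) : nat := if k == iZ then iH else if k == iH then iZ else k.
Definition coef_J1 (k : nat) : R :=
  if (k < 4 * n)%N then blockwise 1 1 (-1) (-1) k else if k == iE then -1 else 1.

Definition col_J2 (k : nat) : nat :=
  if (k < 4 * n)%N then reblock 2 3 0 1 k else if (k < iE)%N then iE else iZ.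
Definition col2_J2 (k : nat) : nat := if (k < iE)%N then iF else iH.
Definition coef_J2 (k : nat) : R :=
  if (k < 4 * n)%N then 1 else if (k < iE)%N then 2^-1 else 1.
Definition coef2_J2 (k : nat) : R :=
  if (k < 4 * n)%N then 0 else if k == iZ then 2^-1 else if k == iH then - 2^-1
  else if k == iE then 1 else -1.

Definition col_P (k : nat) : nat := if (k < 4 * n)%N then reblock 1 0 3 2 k else k.
Definition coef_P (k : nat) : R := if (k < 4 * n)%N then blockwise (-1) 1 (-1) 1 k else 0.

Definition col_G (k : nat) : nat :=
  if (k < 4 * n)%N then reblock 3 2 1 0 k
  else if k == iE then iF else if k == iF then iE else k.
Definition coef_G (k : nat) : R :=
  if (k < 4 * n)%N then blockwise 1 (-1) (-1) 1 k
  else if k == iZ then 2 else if k == iH then -2 else -1.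

Definition J1 : M := sparse_mx col_J1 col_J1 coef_J1 (fun=> 0).
Definition J2 : M := sparse_mx col_J2 col2_J2 coef_J2 coef2_J2.
Definition P : M := sparse_mx col_P col_P coef_P (fun=> 0).
Definition G : M := sparse_mx col_G col_G coef_G (fun=> 0).
Definition Ginv : M := sparse_mx col_G col_G (fun k => (coef_G k)^-1) (fun=> 0).

Ltac index_bound := let i := fresh "i" in let hi := fresh "hi" in
  move=> i hi; rewrite /col_J1 /col_J2 /col2_J2 /col_P /col_G /reblock /blockwise;
  repeat case: ifP => ?; lia.

Lemma entry_sparse1_mx s a (X : V) k :
  (forall k, k < 4 * n + 4 -> s k < 4 * n + 4)%N ->
  entry (sparse_mx s s a (fun=> 0) *m X) k = a (clamp k) * entry X (s (clamp k)).
Proof. by move=> hs; rewrite entry_sparse_mx // mul0r addr0. Qed.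

Lemma entry_J1 (X : V) k :
  entry (J1 *m X) k = coef_J1 (clamp k) * entry X (col_J1 (clamp k)).
Proof. by apply: entry_sparse1_mx; index_bound. Qed.

Lemma entry_J2 (X : V) k : entry (J2 *m X) k =
  coef_J2 (clamp k) * entry X (col_J2 (clamp k))
  + coef2_J2 (clamp k) * entry X (col2_J2 (clamp k)).
Proof. by apply: entry_sparse_mx; index_bound. Qed.

Lemma entry_P (X : V) k :
  entry (P *m X) k = coef_P (clamp k) * entry X (col_P (clamp k)).
Proof. by apply: entry_sparse1_mx; index_bound. Qed.

Lemma entry_G (X : V) k :
  entry (G *m X) k = coef_G (clamp k) * entry X (col_G (clamp k)).
Proof. by apply: entry_sparse1_mx; index_bound. Qed.

Lemma entry_Ginv (X : V) k :
  entry (Ginv *m X) k = (coef_G (clamp k))^-1 * entry X (col_G (clamp k)).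
Proof. by apply: entry_sparse1_mx; index_bound. Qed.

Definition omega (X Y : V) : R :=
  \sum_(j < 2 * n) (entry X j * entry Y (2 * n + j) - entry X (2 * n + j) * entry Y j).

Lemma entry_br (X Y : V) k : entry (br X Y) k =
  if clamp k == iZ then omega X Y
  else if clamp k == iH then entry X iE * entry Y iF - entry X iF * entry Y iE
  else if clamp k == iE then 2 * (entry X iH * entry Y iE - entry X iE * entry Y iH)
  else if clamp k == iF then - 2 * (entry X iH * entry Y iF - entry X iF * entry Y iH)
  else 0.
Proof. by rewrite {1}/entry /hsl_bracket mxE val_inord_clamp. Qed.

Definition basisv (p : nat) : V := \col_(k < dimg n) if val k == p then 1 else 0.

Lemma entry_basisv p k : entry (basisv p) k = if clamp k == p then 1 else 0.
Proof. by rewrite /entry mxE val_inord_clamp. Qed.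

Ltac decide_ifs := repeat match goal with
  | |- context [if ?b then _ else _] =>
      lazymatch b with
      | context [if _ then _ else _] => fail
      | _ => first [have -> : b = true by lia | have -> : b = false by lia]
      end
  end.

Ltac eval_entries := repeat progress (
  rewrite ?entry_J1 ?entry_J2 ?entry_P ?entry_G ?entry_Ginv ?entry_br ?entry_basisv;
  unfold clamp, col_J1, coef_J1, col_J2, col2_J2, coef_J2, coef2_J2, col_P, coef_P,
         col_G, coef_G, reblock, blockwise;
  decide_ifs; rewrite ?mul0n ?mul1n ?add0n ?addKn).

Ltac entry_table := repeat split; eval_entries; first [ring | field].

Lemma J1E_hor (X : V) (j : 'I_n) :
  (entry (J1 *m X) j = entry X j) *
  (entry (J1 *m X) (n + j) = entry X (n + j)) *
  (entry (J1 *m X) (2 * n + j) = - entry X (2 * n + j)) *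
  (entry (J1 *m X) (3 * n + j) = - entry X (3 * n + j)).
Proof. by have hj := ltn_ord j; entry_table. Qed.

Lemma J1E_ver (X : V) :
  (entry (J1 *m X) iZ = entry X iH) * (entry (J1 *m X) iH = entry X iZ) *
  (entry (J1 *m X) iE = - entry X iE) * (entry (J1 *m X) iF = entry X iF).
Proof. by entry_table. Qed.

Lemma J2E_hor (X : V) (j : 'I_n) :
  (entry (J2 *m X) j = entry X (2 * n + j)) *
  (entry (J2 *m X) (n + j) = entry X (3 * n + j)) *
  (entry (J2 *m X) (2 * n + j) = entry X j) *
  (entry (J2 *m X) (3 * n + j) = entry X (n + j)).
Proof. by have hj := ltn_ord j; entry_table. Qed.

Lemma J2E_ver (X : V) :
  (entry (J2 *m X) iZ = 2^-1 * (entry X iE + entry X iF)) *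
  (entry (J2 *m X) iH = 2^-1 * (entry X iE - entry X iF)) *
  (entry (J2 *m X) iE = entry X iZ + entry X iH) *
  (entry (J2 *m X) iF = entry X iZ - entry X iH).
Proof. by entry_table. Qed.

Lemma PE_hor (X : V) (j : 'I_n) :
  (entry (P *m X) j = - entry X (n + j)) *
  (entry (P *m X) (n + j) = entry X j) *
  (entry (P *m X) (2 * n + j) = - entry X (3 * n + j)) *
  (entry (P *m X) (3 * n + j) = entry X (2 * n + j)).
Proof. by have hj := ltn_ord j; entry_table. Qed.

Lemma PE_ver (X : V) :
  (entry (P *m X) iZ = 0) * (entry (P *m X) iH = 0) *
  (entry (P *m X) iE = 0) * (entry (P *m X) iF = 0).
Proof. by entry_table. Qed.

Lemma GE_hor (X : V) (j : 'I_n) :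
  (entry (G *m X) j = entry X (3 * n + j)) *
  (entry (G *m X) (n + j) = - entry X (2 * n + j)) *
  (entry (G *m X) (2 * n + j) = - entry X (n + j)) *
  (entry (G *m X) (3 * n + j) = entry X j).
Proof. by have hj := ltn_ord j; entry_table. Qed.

Lemma GE_ver (X : V) :
  (entry (G *m X) iZ = 2 * entry X iZ) * (entry (G *m X) iH = - 2 * entry X iH) *
  (entry (G *m X) iE = - entry X iF) * (entry (G *m X) iF = - entry X iE).
Proof. by entry_table. Qed.

Lemma GinvE_hor (X : V) (j : 'I_n) :
  (entry (Ginv *m X) j = entry X (3 * n + j)) *
  (entry (Ginv *m X) (n + j) = - entry X (2 * n + j)) *
  (entry (Ginv *m X) (2 * n + j) = - entry X (n + j)) *
  (entry (Ginv *m X) (3 * n + j) = entry X j).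
Proof. by have hj := ltn_ord j; entry_table. Qed.

Lemma GinvE_ver (X : V) :
  (entry (Ginv *m X) iZ = 2^-1 * entry X iZ) *
  (entry (Ginv *m X) iH = - 2^-1 * entry X iH) *
  (entry (Ginv *m X) iE = - entry X iF) * (entry (Ginv *m X) iF = - entry X iE).
Proof. by entry_table. Qed.

Lemma brE_hor (X Y : V) (j : 'I_n) :
  (entry (br X Y) j = 0) * (entry (br X Y) (n + j) = 0) *
  (entry (br X Y) (2 * n + j) = 0) * (entry (br X Y) (3 * n + j) = 0).
Proof. by have hj := ltn_ord j; entry_table. Qed.

Lemma brE_ver (X Y : V) :
  (entry (br X Y) iZ = omega X Y) *
  (entry (br X Y) iH = entry X iE * entry Y iF - entry X iF * entry Y iE) *
  (entry (br X Y) iE = 2 * (entry X iH * entry Y iE - entry X iE * entry Y iH)) *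
  (entry (br X Y) iF = - 2 * (entry X iH * entry Y iF - entry X iF * entry Y iH)).
Proof. by entry_table. Qed.

Definition entryE := (entryD, entryN, entryZ, entry0, J1E_hor, J1E_ver, J2E_hor, J2E_ver,
  PE_hor, PE_ver, GE_hor, GE_ver, GinvE_hor, GinvE_ver, brE_hor, brE_ver).

Ltac entrywise := apply: entryI => k /basis_indexP[j|j|j|j| | | |]; rewrite ?entryE.

Lemma J1_involutive : J1 *m J1 = 1%:M.
Proof. by apply: mulmx_colI => X; rewrite -mulmxA mul1mx; entrywise; ring. Qed.

Lemma J2_involutive : J2 *m J2 = 1%:M.
Proof. by apply: mulmx_colI => X; rewrite -mulmxA mul1mx; entrywise; field. Qed.

Lemma J2_J1_anticommute : J2 *m J1 = - (J1 *m J2).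
Proof. by apply: mulmx_colI => X; rewrite mulNmx -!mulmxA; entrywise; field. Qed.

Lemma G_Ginv : G *m Ginv = 1%:M.
Proof. by apply: mulmx_colI => X; rewrite -mulmxA mul1mx; entrywise; field. Qed.

Lemma P_J1_commute : P *m J1 = J1 *m P.
Proof. by apply: mulmx_colI => X; rewrite -!mulmxA; entrywise; ring. Qed.

Lemma P_J2_commute : P *m J2 = J2 *m P.
Proof. by apply: mulmx_colI => X; rewrite -!mulmxA; entrywise; ring. Qed.

Definition g_hor (X Y : V) : R :=
  \sum_(j < n) (entry X j * entry Y (3 * n + j) - entry X (n + j) * entry Y (2 * n + j)
                - entry X (2 * n + j) * entry Y (n + j) + entry X (3 * n + j) * entry Y j).

Definition g_sl2 (X Y : V) : R :=
  - 2 * entry X iH * entry Y iH - entry X iE * entry Y iF - entry X iF * entry Y iE.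

Lemma omega_blocks (X Y : V) : omega X Y =
  \sum_(j < n) (entry X j * entry Y (2 * n + j) - entry X (2 * n + j) * entry Y j
                + entry X (n + j) * entry Y (3 * n + j)
                - entry X (3 * n + j) * entry Y (n + j)).
Proof.
rewrite /omega (big_ord_double _ (fun j =>
  entry X j * entry Y (2 * n + j) - entry X (2 * n + j) * entry Y j)).
by apply: eq_bigr => j _; rewrite addnA (_ : 2 * n + n = 3 * n)%N ?addrA //; lia.
Qed.

Ltac blockwise_sum := rewrite -?sumrN; apply: eq_bigr => j _; rewrite ?entryE; ring.

Lemma omega_anti (X Y : V) : omega Y X = - omega X Y.
Proof. by rewrite !omega_blocks; blockwise_sum. Qed.

Lemma omega_J1 (X Y : V) : omega (J1 *m X) (J1 *m Y) = - omega X Y.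
Proof. by rewrite !omega_blocks; blockwise_sum. Qed.

Lemma omega_J1l (X Y : V) : omega (J1 *m X) Y = - omega X (J1 *m Y).
Proof. by rewrite !omega_blocks; blockwise_sum. Qed.

Lemma omega_J2 (X Y : V) : omega (J2 *m X) (J2 *m Y) = - omega X Y.
Proof. by rewrite !omega_blocks; blockwise_sum. Qed.

Lemma omega_J2l (X Y : V) : omega (J2 *m X) Y = - omega X (J2 *m Y).
Proof. by rewrite !omega_blocks; blockwise_sum. Qed.

Lemma omega_J12l (X Y : V) : omega (J1 *m (J2 *m X)) Y = - omega X (J1 *m (J2 *m Y)).
Proof. by rewrite !omega_blocks; blockwise_sum. Qed.

Lemma g_hor_sym (X Y : V) : g_hor Y X = g_hor X Y.
Proof. by rewrite /g_hor; blockwise_sum. Qed.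

Lemma g_hor_J1 (X Y : V) : g_hor (J1 *m X) (J1 *m Y) = - g_hor X Y.
Proof. by rewrite /g_hor; blockwise_sum. Qed.

Lemma g_hor_J2 (X Y : V) : g_hor (J2 *m X) (J2 *m Y) = - g_hor X Y.
Proof. by rewrite /g_hor; blockwise_sum. Qed.

Lemma g_hor_Pl (X Y : V) : g_hor (P *m X) Y = - omega X Y.
Proof. by rewrite /g_hor omega_blocks; blockwise_sum. Qed.

Lemma g_hor_Pr (X Y : V) : g_hor X (P *m Y) = omega X Y.
Proof. by rewrite /g_hor omega_blocks; blockwise_sum. Qed.

Lemma g_hor_br (X Y Z : V) : g_hor (br X Y) Z = 0.
Proof. by rewrite /g_hor big1 // => j _; rewrite ?entryE; ring. Qed.

Lemma bformE (X Y : V) :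
  bform G X Y = g_hor X Y + 2 * entry X iZ * entry Y iZ + g_sl2 X Y.
Proof.
rewrite /bform -mulmxA mxE.
under eq_bigr do rewrite mxE -!entry_ord.
rewrite (sum_dimg_blocks (fun k => entry X k * entry (G *m Y) k)) /g_hor /g_sl2 -!addrA.
by congr (_ + _); [apply: eq_bigr => j _ |]; rewrite ?entryE; ring.
Qed.

Lemma G_sym : G^T = G.
Proof. by apply: bformI => X Y; rewrite bform_tr !bformE g_hor_sym /g_sl2; ring. Qed.

Lemma G_metric : is_metric G.
Proof. exact: is_metric_sym_inv G_sym G_Ginv. Qed.

Lemma bform_J1 (X Y : V) : bform G (J1 *m X) (J1 *m Y) = - bform G X Y.
Proof. by rewrite !bformE g_hor_J1 /g_sl2 ?entryE; ring. Qed.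

Lemma bform_J2 (X Y : V) : bform G (J2 *m X) (J2 *m Y) = - bform G X Y.
Proof. by rewrite !bformE g_hor_J2 /g_sl2 ?entryE; field. Qed.

Lemma bform_Pl (X Y : V) : bform G (P *m X) Y = - omega X Y.
Proof. by rewrite bformE g_hor_Pl /g_sl2 ?entryE; ring. Qed.

Lemma P_skew (X Y : V) : bform G (P *m X) Y = - bform G X (P *m Y).
Proof. by rewrite bform_Pl bformE g_hor_Pr /g_sl2 ?entryE; ring. Qed.

Lemma bform_br (X Y Z : V) :
  bform G (br X Y) Z = 2 * omega X Y * entry Z iZ + g_sl2 (br X Y) Z.
Proof. by rewrite bformE g_hor_br ?entryE; ring. Qed.

Lemma g_sl2_br_skew (X Y Z : V) : g_sl2 (br X Y) Z = - g_sl2 (br X Z) Y.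
Proof. by rewrite /g_sl2 ?entryE; ring. Qed.

Definition Gam (i : 'I_(dimg n)) : M := ((val i == iZ)%:R * 2) *: P.

Lemma nabla_GamE (X Y : V) : nabla Gam X Y = (2 * entry X iZ) *: (P *m Y).
Proof.
rewrite nabla_scale -sum_delta_entry; last by lia.
by congr (_ *: _); apply: eq_bigr => i _; rewrite mulrC.
Qed.

Lemma torsion3E (X Y Z : V) : torsion3 br G Gam X Y Z =
  - 2 * entry X iZ * omega Y Z + 2 * entry Y iZ * omega X Z
  - 2 * omega X Y * entry Z iZ - g_sl2 (br X Y) Z.
Proof.
by rewrite /torsion3 /torsion !bformBl !nabla_GamE !bformZl !bform_Pl bform_br; ring.
Qed.

Lemma Gam_HPKT_connection : HPKT_connection br J1 J2 (J1 *m J2) G Gam.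
Proof.
have P_J12_commute : P *m (J1 *m J2) = J1 *m J2 *m P.
  by rewrite mulmxA P_J1_commute -mulmxA P_J2_commute mulmxA.
split; [|split].
- by move=> X Y Z; apply: nabla_scale_metric; apply: P_skew.
- by move=> X Y; split; apply: nabla_scale_commute;
    [apply: P_J1_commute | apply: P_J2_commute | apply: P_J12_commute].
- move=> X Y Z; rewrite !torsion3E (omega_anti Y Z) g_sl2_br_skew; ring.
Qed.

Definition omegaE := (omega_J1, omega_J2, omega_J12l, omega_J1l, omega_J2l).

Lemma J1_integrable : integrable br J1.
Proof. by move=> X Y; rewrite /nijenhuis; entrywise; rewrite ?omegaE; ring. Qed.

Lemma J2_integrable : integrable br J2.
Proof. by move=> X Y; rewrite /nijenhuis; entrywise; rewrite ?omegaE; field. Qed.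

Lemma J12_integrable : integrable br (J1 *m J2).
Proof.
by move=> X Y; rewrite /nijenhuis -!mulmxA; entrywise; rewrite ?omegaE; field.
Qed.

Lemma omega_basisv p (Y : V) : (p < 4 * n)%N ->
  omega (basisv p) Y =
  if (p < 2 * n)%N then entry Y (2 * n + p) else - entry Y (p - 2 * n).
Proof.
move=> hp; pose i := if (p < 2 * n)%N then p else (p - 2 * n)%N.
have hi : (i < 2 * n)%N by rewrite /i; case: ifP; lia.
rewrite /omega (bigD1 (Ordinal hi)) //= big1 ?addr0 => [|j neq_ji].
  by rewrite /i; case: ifP => ?; eval_entries; ring.
have {neq_ji} : (j : nat) != i by apply: contraNneq neq_ji => eq_ji; apply/eqP/val_inj.
by rewrite /i; have := ltn_ord j; case: ifP => ? ? ?; eval_entries; ring.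
Qed.

Definition horizontal (X : V) : Prop :=
  [/\ entry X iZ = 0, entry X iH = 0, entry X iE = 0 & entry X iF = 0].

Lemma g_sl2_horizontal (X W : V) : horizontal W -> g_sl2 X W = 0.
Proof. by case=> _ hH hE hF; rewrite /g_sl2 hH hE hF; ring. Qed.

Lemma torsion3_br_horizontal (X Y Z W : V) : horizontal Z -> horizontal W ->
  torsion3 br G Gam (br X Y) Z W = - 2 * omega X Y * omega Z W.
Proof.
move=> hZ hW; rewrite torsion3E brE_ver g_sl2_horizontal //.
by case: hZ hW => [-> _ _ _] [-> _ _ _]; ring.
Qed.

Lemma d3_torsion3_horizontal (a b c d : V) :
  horizontal a -> horizontal b -> horizontal c -> horizontal d ->
  d3 br (torsion3 br G Gam) a b c d =
  4 * (omega a b * omega c d - omega a c * omega b d + omega a d * omega b c).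
Proof.
by move=> ha hb hc hd; rewrite /d3 !torsion3_br_horizontal //; ring.
Qed.

Lemma basisv_horizontal p : (p < 4 * n)%N -> horizontal (basisv p).
Proof. by move=> hp; split; eval_entries. Qed.

Lemma Gam_not_strong : (0 < n)%N -> ~ strong br G Gam.
Proof.
move=> n_gt0 strongG.
have := strongG (basisv 0%N) (basisv (2 * n)%N) (basisv n) (basisv (3 * n)%N).
rewrite d3_torsion3_horizontal; try by apply: basisv_horizontal; lia.
rewrite !omega_basisv; try lia.
by eval_entries => d3_eq0; lra.
Qed.

End HeisenbergSl2.

Theorem mainTheorem8 (R : realType) (n : nat) (hn : (1 <= n)%N) :
  exists (J1 J2 J3 G : 'M[R]_(dimg n)) (Gam : 'I_(dimg n) -> 'M[R]_(dimg n)),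
    HPKT (@hsl_bracket R n) J1 J2 J3 G Gam /\
    ~ strong (@hsl_bracket R n) G Gam.
Proof.
exists (J1 R n), (J2 R n), (J1 R n *m J2 R n), (G R n), (@Gam R n).
split; last exact: Gam_not_strong.
split; last exact: Gam_HPKT_connection.
- split; last exact: J12_integrable.
  + by apply: almost_hyper_paracomplex_mul;
      [apply: J1_involutive | apply: J2_involutive | apply: J2_J1_anticommute].
  + exact: J1_integrable.
  + exact: J2_integrable.
- by apply: hyperparahermitian_mul; [apply: G_metric | apply: bform_J1 | apply: bform_J2].
Qed.
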